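(* Let $\mathscr{S}\subset\mathbb{T}^n$ be tropically convex. Then $\mathscr{S}$ is a projected tropical Metzler spectrahedron if and only if its homogenization $\mathscr{S}^h\subset\mathbb{T}^{n+1}$ is a projected tropical Metzler spectrahedron.
   Context: $\mathbb{T}=\mathbb{R}\cup\{-\infty\}$, $-\infty+a=-\infty$. Tropically convex: $\max(\lambda+x,\mu+y)\in X$ for $x,y\in X$, $\lambda,\mu\in\mathbb{T}$, $\max(\lambda,\mu)=0$. Homogenization: $\mathscr{S}^h=\{(x_0,x_0+x)\in\mathbb{T}^{n+1}: x_0\in\mathbb{T},\ x\in\mathscr{S}\}$, where $x_0+x$ has entries $x_0+x_k$. Signed tropical numbers $\mathbb{S}=(\{\pm1\}\times\mathbb{R})\cup\{(0,-\infty)\}$, $(1,a)$ positive, $(-1,a)$ negative, modulus $|(s,a)|=a$; a matrix over $\mathbb{S}$ is tropical Metzler if off-diagonal entries are negative or $(0,-\infty)$. For symmetric tropical Metzler $Q^{(0)},\dots,Q^{(N)}$, with $x_0:=0$, $x\in\mathbb{T}^N$: $Q^{+}_{ii}(x)=\max\{|Q^{(k)}_{ii}|+x_k: Q^{(k)}_{ii}\text{ positive}\}$, $Q^-_{ii}$ likewise with negative entries ($\max\emptyset=-\infty$), $Q_{ij}(x)=\max_k(|Q^{(k)}_{ij}|+x_k)$ ($i\ne j$); the tropical Metzler spectrahedron $\mathcal{S}(Q^{(0)}|Q^{(1)},\dots,Q^{(N)})=\{x\in\mathbb{T}^N: Q^+_{ii}(x)\ge Q^-_{ii}(x)\ \forall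 i,\ Q^+_{ii}(x)+Q^+_{jj}(x)\ge2Q_{ij}(x)\ \forall i\ne j\}$. A subset of $\mathbb{T}^d$ is a projected tropical Metzler spectrahedron if it is the image of a tropical Metzler spectrahedron in $\mathbb{T}^{d+d'}$ ($d'\ge0$) under projection onto the first $d$ coordinates. *)

From Stdlib Require Import Reals.
From mathcomp Require Import all_boot.
Set Implicit Arguments. Unset Strict Implicit. Unset Printing Implicit Defensive.

Inductive trop : Type := NegInf | Fin (a : R).

(* tropical "multiplication" = ordinary addition, with -oo absorbing *)
Definition tplus (a b : trop) : trop :=
  match a, b with Fin x, Fin y => Fin (Rplus x y) | _, _ => NegInf end.

Definition tmax (a b : trop) : trop :=
  match a, b with
  | NegInf, _ => b
  | _, NegInf => a
  | Fin x, Fin y => Fin (Rmax x y)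
  end.

Definition tle (a b : trop) : Prop :=
  match a, b with
  | NegInf, _ => True
  | Fin _, NegInf => False
  | Fin x, Fin y => Rle x y
  end.

Definition tvec (n : nat) := 'I_n -> trop.

Definition trop_convex (n : nat) (X : tvec n -> Prop) : Prop :=
  forall (x y : tvec n) (lam mu : trop),
    X x -> X y -> tmax lam mu = Fin R0 ->
    X (fun i => tmax (tplus lam (x i)) (tplus mu (y i))).

Definition homogenization (n : nat) (S : tvec n -> Prop) : tvec n.+1 -> Prop :=
  fun z => exists (x0 : trop) (x : tvec n),
    S x /\ z ord0 = x0 /\ forall i : 'I_n, z (lift ord0 i) = tplus x0 (x i).

(* Signed tropical numbers: (1,a), (-1,a), (0,-oo). *)
Inductive strop : Type := SPos (a : R) | SNeg (a : R) | SZero.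

Definition smod (s : strop) : trop :=
  match s with SPos a => Fin a | SNeg a => Fin a | SZero => NegInf end.

Definition smat (m : nat) := 'I_m -> 'I_m -> strop.

Definition symmetric_smat (m : nat) (A : smat m) : Prop :=
  forall i j, A i j = A j i.

Definition metzler_smat (m : nat) (A : smat m) : Prop :=
  forall i j, i != j -> (exists a, A i j = SNeg a) \/ A i j = SZero.

Definition ext0 (N : nat) (x : tvec N) : tvec N.+1 :=
  fun k => match unlift ord0 k with Some k' => x k' | None => Fin R0 end.

Definition Qplus (N m : nat) (Q : 'I_N.+1 -> smat m) (x : tvec N) (i : 'I_m) : trop :=
  \big[tmax/NegInf]_(k < N.+1)
    (match Q k i i with SPos a => tplus (Fin a) (ext0 x k) | _ => NegInf end).

Definition Qminus (N m : nat) (Q : 'I_N.+1 -> smat m) (x : tvec N) (i : 'I_m) : trop :=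
  \big[tmax/NegInf]_(k < N.+1)
    (match Q k i i with SNeg a => tplus (Fin a) (ext0 x k) | _ => NegInf end).

Definition Qoff (N m : nat) (Q : 'I_N.+1 -> smat m) (x : tvec N) (i j : 'I_m) : trop :=
  \big[tmax/NegInf]_(k < N.+1) tplus (smod (Q k i j)) (ext0 x k).

Definition metzler_spectrahedron (N m : nat) (Q : 'I_N.+1 -> smat m) : tvec N -> Prop :=
  fun x =>
    (forall i, tle (Qminus Q x i) (Qplus Q x i)) /\
    (forall i j, i != j ->
       tle (tplus (Qoff Q x i j) (Qoff Q x i j))
           (tplus (Qplus Q x i) (Qplus Q x j))).

Definition projected_metzler_spectrahedron (d : nat) (P : tvec d -> Prop) : Prop :=
  exists (d' m : nat) (Q : 'I_(d + d').+1 -> smat m),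
    (forall k, symmetric_smat (Q k) /\ metzler_smat (Q k)) /\
    forall x : tvec d,
      P x <-> exists y : tvec (d + d'),
        metzler_spectrahedron Q y /\ forall i : 'I_d, x i = y (lshift d' i).

(* Attaching the constant term Q^(0) of a pencil to a new variable x_0 homogenizes it:
   every tropical spectrahedral inequality is invariant under adding a common constant
   to all variables, so at a point with finite x_0 the homogenized pencil is satisfied
   exactly by the translates of points of the original spectrahedron.  Points with
   x_0 = -oo are tamed by the extra 2x2 conditions 2 x_i <= x_0 + w, which force
   x = -oo and whose slack is absorbed by a new variable w when x_0 is finite.
   Conversely, a pencil for S^h yields one for S by pinning x_0 to 0 with two signed
   diagonal conditions x_0 - 0 >= 0 and 0 - x_0 >= 0. *)

From Stdlib Require Import Reals Lra FunctionalExtensionality Classical.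
From Stdlib Require Rminmax.
From HB Require Import structures.
From mathcomp Require Import all_boot zify.
Set Implicit Arguments. Unset Strict Implicit. Unset Printing Implicit Defensive.

(** * Tropical arithmetic *)

Lemma tmaxA : associative tmax.
Proof. by case=> [|a] [|b] [|c] //=; rewrite Rmax_assoc. Qed.

Lemma tmaxC : commutative tmax.
Proof. by case=> [|a] [|b] //=; rewrite Rmax_comm. Qed.

Lemma tmax0t : left_id NegInf tmax.
Proof. by case. Qed.

HB.instance Definition _ := Monoid.isComLaw.Build trop NegInf tmax tmaxA tmaxC tmax0t.

Lemma tle_refl a : tle a a.
Proof. by case: a => //= a; lra. Qed.

Lemma tle_trans a b c : tle a b -> tle b c -> tle a c.
Proof. by case: a => [|a]; case: b => [|b]; case: c => [|c] //=; lra. Qed.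

Lemma tle_anti a b : tle a b -> tle b a -> a = b.
Proof. by case: a => [|a]; case: b => [|b] //= *; f_equal; lra. Qed.

Lemma tle_maxl a b : tle a (tmax a b).
Proof. case: a => [|a]; case: b => [|b] //=; [lra | apply: Rmax_l]. Qed.

Lemma tle_lub a b c : tle a c -> tle b c -> tle (tmax a b) c.
Proof. by case: a => [|a]; case: b => [|b]; case: c => [|c] //= *; apply: Rmax_lub. Qed.

Lemma tplusC a b : tplus a b = tplus b a.
Proof. by case: a => [|a]; case: b => [|b] //=; rewrite Rplus_comm. Qed.

Lemma tplusA a b c : tplus a (tplus b c) = tplus (tplus a b) c.
Proof. by case: a => [|a]; case: b => [|b]; case: c => [|c] //=; rewrite Rplus_assoc. Qed.

Lemma tplus0t t : tplus (Fin 0) t = t.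
Proof. by case: t => //= a; rewrite Rplus_0_l. Qed.

Lemma tplust0 t : tplus t (Fin 0) = t.
Proof. by rewrite tplusC tplus0t. Qed.

Lemma tplustN t : tplus t NegInf = NegInf.
Proof. by case: t. Qed.

Lemma tplusKt r t : tplus (Fin r) (tplus (Fin (- r)) t) = t.
Proof. by case: t => //= a; f_equal; lra. Qed.

Lemma tplus_tmaxr c : {morph tplus c : a b / tmax a b}.
Proof.
by case: c => [|c] [|a] [|b] //=; rewrite Rminmax.R.plus_max_distr_l.
Qed.

Lemma tle_tplus2l r a b : tle (tplus (Fin r) a) (tplus (Fin r) b) <-> tle a b.
Proof. by case: a => [|a]; case: b => [|b] //=; split; lra. Qed.

Lemma tle_double_tplus2l r a b c :
  tle (tplus (tplus (Fin r) a) (tplus (Fin r) a))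
      (tplus (tplus (Fin r) b) (tplus (Fin r) c)) <->
  tle (tplus a a) (tplus b c).
Proof. by case: a => [|a]; case: b => [|b]; case: c => [|c] //=; split; lra. Qed.

Section BigTmax.
Variable N : nat.
Implicit Types F : 'I_N -> trop.

Lemma ler_big_tmax F k : tle (F k) (\big[tmax/NegInf]_(j < N) F j).
Proof. by rewrite (bigD1 k) //=; apply: tle_maxl. Qed.

Lemma big_tmax_lub F t :
  (forall k, tle (F k) t) -> tle (\big[tmax/NegInf]_(j < N) F j) t.
Proof. by move=> H; apply: (big_ind (tle^~ t)) => // x y; apply: tle_lub. Qed.

Lemma big_tmax_supp1 F k0 :
  (forall k, k != k0 -> F k = NegInf) -> \big[tmax/NegInf]_(j < N) F j = F k0.
Proof. by move=> H; rewrite (bigD1 k0) //= big1 // tmaxC. Qed.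

Lemma big_tmax_tplusr c F :
  tplus c (\big[tmax/NegInf]_(j < N) F j) = \big[tmax/NegInf]_(j < N) tplus c (F j).
Proof. exact: (big_morph (tplus c) (tplus_tmaxr c) (tplustN c)). Qed.

End BigTmax.

Lemma ler_big_tmax2 N M (F : 'I_N -> trop) (G : 'I_M -> trop) :
  (forall k, exists k', tle (F k) (G k')) ->
  tle (\big[tmax/NegInf]_(j < N) F j) (\big[tmax/NegInf]_(j < M) G j).
Proof.
move=> H; apply: big_tmax_lub => k; have [k' Hk'] := H k.
exact: tle_trans Hk' (ler_big_tmax _ _).
Qed.

(** * Spectrahedral conditions at homogeneous points *)

Definition spos (s : strop) : trop := if s is SPos a then Fin a else NegInf.
Definition sneg (s : strop) : trop := if s is SNeg a then Fin a else NegInf.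

Definition metzler_pencil N m (Q : 'I_N -> smat m) : Prop :=
  forall k, symmetric_smat (Q k) /\ metzler_smat (Q k).

(* [coef_max spos], [coef_max sneg] and [coef_max smod] are the entries [Q^+], [Q^-]
   and [Q_ij] evaluated at a homogeneous point [u], i.e. with [u 0] playing the role
   of [x_0]. *)
Definition coef_max (c : strop -> trop) N m (Q : 'I_N -> smat m) (u : 'I_N -> trop)
    (a b : 'I_m) : trop :=
  \big[tmax/NegInf]_(k < N) tplus (c (Q k a b)) (u k).

Definition hom_spectrahedron N m (Q : 'I_N -> smat m) (u : 'I_N -> trop) : Prop :=
  (forall i, tle (coef_max sneg Q u i i) (coef_max spos Q u i i)) /\
  (forall i j, i != j ->
     tle (tplus (coef_max smod Q u i j) (coef_max smod Q u i j))
         (tplus (coef_max spos Q u i i) (coef_max spos Q u j j))).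

Lemma QplusE N m (Q : 'I_N.+1 -> smat m) x i : Qplus Q x i = coef_max spos Q (ext0 x) i i.
Proof. by apply: eq_bigr => k _; case: (Q k i i). Qed.

Lemma QminusE N m (Q : 'I_N.+1 -> smat m) x i : Qminus Q x i = coef_max sneg Q (ext0 x) i i.
Proof. by apply: eq_bigr => k _; case: (Q k i i). Qed.

Lemma metzler_spectrahedronE N m (Q : 'I_N.+1 -> smat m) x :
  metzler_spectrahedron Q x <-> hom_spectrahedron Q (ext0 x).
Proof. by rewrite /metzler_spectrahedron; setoid_rewrite QplusE; setoid_rewrite QminusE. Qed.

Lemma ext0_0 N (x : tvec N) : ext0 x ord0 = Fin 0.
Proof. by rewrite /ext0 unlift_none. Qed.

Lemma ext0_lift N (x : tvec N) i : ext0 x (lift ord0 i) = x i.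
Proof. by rewrite /ext0 liftK. Qed.

Section CoefMax.
Variables (c : strop -> trop) (N m : nat) (Q : 'I_N -> smat m).

Lemma coef_max_shift r v a b :
  coef_max c Q (fun k => tplus (Fin r) (v k)) a b = tplus (Fin r) (coef_max c Q v a b).
Proof.
rewrite /coef_max big_tmax_tplusr; apply: eq_bigr => k _.
by rewrite !tplusA (tplusC (Fin r)).
Qed.

Lemma coef_max_NegInf u a b :
  (forall k, c (Q k a b) = NegInf \/ u k = NegInf) -> coef_max c Q u a b = NegInf.
Proof. by move=> H; rewrite /coef_max big1 // => k _; case: (H k) => ->; rewrite ?tplustN. Qed.

Lemma coef_max_supp1 k0 u a b :
  (forall k, k != k0 -> c (Q k a b) = NegInf) ->
  coef_max c Q u a b = tplus (c (Q k0 a b)) (u k0).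
Proof. by move=> H; apply: big_tmax_supp1 => k /H ->. Qed.

End CoefMax.

Lemma hom_spectrahedron_shift N m (Q : 'I_N -> smat m) v r :
  hom_spectrahedron Q (fun k => tplus (Fin r) (v k)) <-> hom_spectrahedron Q v.
Proof.
rewrite /hom_spectrahedron.
setoid_rewrite coef_max_shift; setoid_rewrite tle_tplus2l.
by setoid_rewrite tle_double_tplus2l.
Qed.

Lemma hom_spectrahedron_eq N N' m (Q : 'I_N -> smat m) (Q' : 'I_N' -> smat m) u u' :
  (forall c, c SZero = NegInf -> forall a b, coef_max c Q u a b = coef_max c Q' u' a b) ->
  hom_spectrahedron Q u <-> hom_spectrahedron Q' u'.
Proof.
move=> E; have Ep := E spos erefl; have Em := E sneg erefl; have Eo := E smod erefl.
rewrite /hom_spectrahedron.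
by split=> -[H1 H2]; split=> [i | i j /H2]; rewrite ?Ep ?Em ?Eo // -?Ep -?Em -?Eo; apply: H1.
Qed.

Lemma hom_spectrahedron_ext N m (Q : 'I_N -> smat m) u v :
  u =1 v -> hom_spectrahedron Q u <-> hom_spectrahedron Q v.
Proof.
by move=> uv; apply: hom_spectrahedron_eq => c _ a b; apply: eq_bigr => k _; rewrite uv.
Qed.

Lemma hom_spectrahedron_NegInf N m (Q : 'I_N -> smat m) : hom_spectrahedron Q (fun _ => NegInf).
Proof.
have E c a b : coef_max c Q (fun _ => NegInf) a b = NegInf.
  by apply: coef_max_NegInf; right.
by split=> [i|i j _]; rewrite !E.
Qed.

Definition zero_smat m : smat m := fun _ _ => SZero.

Lemma metzler_zero_smat m : symmetric_smat (@zero_smat m) /\ metzler_smat (@zero_smat m).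
Proof. by split=> // i j _; right. Qed.

Section Push.
Variables (N M m : nat) (pi : 'I_N -> 'I_M) (Q : 'I_N -> smat m).

Definition pencil_push : 'I_M -> smat m :=
  fun k => if [pick j | pi j == k] is Some j then Q j else @zero_smat m.

Lemma metzler_pencil_push : metzler_pencil Q -> metzler_pencil pencil_push.
Proof.
move=> HQ k; rewrite /pencil_push.
by case: pickP => [j _|_]; [apply: HQ | apply: metzler_zero_smat].
Qed.

Hypothesis pi_inj : injective pi.

Lemma coef_max_push c u a b : c SZero = NegInf ->
  coef_max c pencil_push u a b = coef_max c Q (fun j => u (pi j)) a b.
Proof.
move=> c0; apply: tle_anti.
- apply: big_tmax_lub => k; rewrite /pencil_push; case: pickP => [j /eqP <-|_].
    exact: (ler_big_tmax (fun j => tplus (c (Q j a b)) (u (pi j)))).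
  by rewrite /= c0.
- apply: ler_big_tmax2 => j; exists (pi j); rewrite /pencil_push.
  case: pickP => [j' /eqP /pi_inj -> | /(_ j)]; [exact: tle_refl | by rewrite eqxx].
Qed.

Lemma hom_spectrahedron_push u :
  hom_spectrahedron pencil_push u <-> hom_spectrahedron Q (fun j => u (pi j)).
Proof. by apply: hom_spectrahedron_eq => c c0 a b; apply: coef_max_push. Qed.

End Push.

Section Block.
Variables (N m1 m2 : nat) (Q1 : 'I_N -> smat m1) (Q2 : 'I_N -> smat m2).

Definition pencil_block : 'I_N -> smat (m1 + m2) :=
  fun k a b => match split a, split b with
  | inl a', inl b' => Q1 k a' b'
  | inr a', inr b' => Q2 k a' b'
  | _, _ => SZero
  end.

Lemma metzler_pencil_block :
  metzler_pencil Q1 -> metzler_pencil Q2 -> metzler_pencil pencil_block.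
Proof.
move=> H1 H2 k; split=> [a b | a b ab]; rewrite /pencil_block.
- case: (split a) => a'; case: (split b) => b' //.
  + by case: (H1 k) => + _; apply.
  + by case: (H2 k) => + _; apply.
- case: split_ordP => a' Ea; case: split_ordP => b' Eb; subst; try by right.
  + by case: (H1 k) => _; apply; apply: contra ab => /eqP ->.
  + by case: (H2 k) => _; apply; apply: contra ab => /eqP ->.
Qed.

Variable u : 'I_N -> trop.

Lemma coef_max_block_l c a b :
  coef_max c pencil_block u (lshift m2 a) (lshift m2 b) = coef_max c Q1 u a b.
Proof. by rewrite /coef_max /pencil_block !(unsplitK (inl _)). Qed.

Lemma coef_max_block_r c a b :
  coef_max c pencil_block u (rshift m1 a) (rshift m1 b) = coef_max c Q2 u a b.
Proof. by rewrite /coef_max /pencil_block !(unsplitK (inr _)). Qed.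

Lemma coef_max_block_lr a b : coef_max smod pencil_block u (lshift m2 a) (rshift m1 b) = NegInf.
Proof.
by apply: coef_max_NegInf => k; left; rewrite /pencil_block (unsplitK (inl _)) (unsplitK (inr _)).
Qed.

Lemma coef_max_block_rl a b : coef_max smod pencil_block u (rshift m1 b) (lshift m2 a) = NegInf.
Proof.
by apply: coef_max_NegInf => k; left; rewrite /pencil_block (unsplitK (inl _)) (unsplitK (inr _)).
Qed.

Lemma hom_spectrahedron_block :
  hom_spectrahedron pencil_block u <-> hom_spectrahedron Q1 u /\ hom_spectrahedron Q2 u.
Proof.
split.
- case=> H1 H2; split; split.
  + by move=> i; move: (H1 (lshift m2 i)); rewrite !coef_max_block_l.
  + move=> i j ij; move: (H2 (lshift m2 i) (lshift m2 j)); rewrite !coef_max_block_l.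
    by apply; rewrite eq_shift.
  + by move=> i; move: (H1 (rshift m1 i)); rewrite !coef_max_block_r.
  + move=> i j ij; move: (H2 (rshift m1 i) (rshift m1 j)); rewrite !coef_max_block_r.
    by apply; rewrite eq_shift.
- case=> -[A1 A2] [B1 B2]; split.
  + by move=> i; case: (split_ordP i) => i' ->; rewrite ?coef_max_block_l ?coef_max_block_r.
  + move=> i j; case: (split_ordP i) => i' ->; case: (split_ordP j) => j' ->;
      rewrite ?coef_max_block_l ?coef_max_block_r ?eq_shift //; try by [apply: A2 | apply: B2].
    * by rewrite coef_max_block_lr.
    * by rewrite coef_max_block_rl.
Qed.

End Block.

(** * Gadgets *)

Section ConeGadget.
Variables (M n : nat) (k0 kw : 'I_M) (kz : 'I_n -> 'I_M).

(* Evaluated at [u], the diagonal is [u k0, u kw, ..., u kw] and the rest of row 0 is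
   [-u (kz i)]; the 2x2 conditions thus read [2 u (kz i) <= u k0 + u kw]. *)
Definition cone_gadget : 'I_M -> smat n.+1 :=
  fun k a b => match unlift ord0 a, unlift ord0 b with
  | None, None => if k == k0 then SPos 0 else SZero
  | Some _, Some _ => if (a == b) && (k == kw) then SPos 0 else SZero
  | None, Some i | Some i, None => if k == kz i then SNeg 0 else SZero
  end.

Lemma metzler_cone_gadget : metzler_pencil cone_gadget.
Proof.
move=> k; split=> a b; case: (unliftP ord0 a) => [i|] ->; case: (unliftP ord0 b) => [j|] ->;
  rewrite /cone_gadget ?liftK ?unlift_none ?eqxx //.
- by rewrite eq_sym.
- by move/negbTE ->; right.
- by move=> _; case: (k == kz i); [left; exists R0 | right].
- by move=> _; case: (k == kz j); [left; exists R0 | right].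
Qed.

Lemma coef_max_cone_gadget_00 u : coef_max spos cone_gadget u ord0 ord0 = u k0.
Proof.
rewrite (coef_max_supp1 _ _ (k0 := k0)) /cone_gadget ?unlift_none ?eqxx ?tplus0t //.
by move=> k /negbTE ->.
Qed.

Lemma coef_max_cone_gadget_ii u i :
  coef_max spos cone_gadget u (lift ord0 i) (lift ord0 i) = u kw.
Proof.
rewrite (coef_max_supp1 _ _ (k0 := kw)) /cone_gadget ?liftK ?eqxx ?tplus0t //.
by move=> k /negbTE ->; rewrite andbF.
Qed.

Lemma coef_max_cone_gadget_0i u i :
  coef_max smod cone_gadget u ord0 (lift ord0 i) = u (kz i) /\
  coef_max smod cone_gadget u (lift ord0 i) ord0 = u (kz i).
Proof.
by split; rewrite (coef_max_supp1 _ _ (k0 := kz i)) /cone_gadget ?liftK ?unlift_none ?eqxx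
  ?tplus0t // => k /negbTE ->.
Qed.

Lemma coef_max_cone_gadget_ij u i j : i != j ->
  coef_max smod cone_gadget u (lift ord0 i) (lift ord0 j) = NegInf.
Proof.
move=> ij; apply: coef_max_NegInf => k; left.
by rewrite /cone_gadget !liftK (inj_eq (@lift_inj _ ord0)) (negbTE ij).
Qed.

Lemma coef_max_cone_gadget_neg u a : coef_max sneg cone_gadget u a a = NegInf.
Proof.
apply: coef_max_NegInf => k; left; rewrite /cone_gadget.
by case: unliftP => [i|] _; [case: (_ && _) | case: (_ == _)].
Qed.

Lemma hom_spectrahedron_cone_gadget u : hom_spectrahedron cone_gadget u <->
  forall i, tle (tplus (u (kz i)) (u (kz i))) (tplus (u k0) (u kw)).
Proof.
split.
- case=> _ H i; move: (H ord0 (lift ord0 i) (neq_lift _ _)).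
  by rewrite (coef_max_cone_gadget_0i u i).1 coef_max_cone_gadget_00 coef_max_cone_gadget_ii.
- move=> H; split=> [i | a b]; first by rewrite coef_max_cone_gadget_neg.
  case: (unliftP ord0 a) => [i|] ->; case: (unliftP ord0 b) => [j|] ->.
  + by rewrite (inj_eq (@lift_inj _ ord0)) => /coef_max_cone_gadget_ij ->.
  + rewrite (coef_max_cone_gadget_0i u i).2 coef_max_cone_gadget_00 coef_max_cone_gadget_ii.
    by rewrite tplusC; move=> _; apply: H.
  + by rewrite (coef_max_cone_gadget_0i u j).1 coef_max_cone_gadget_00 coef_max_cone_gadget_ii.
  + by rewrite eqxx.
Qed.

End ConeGadget.

Section EqGadget.
Variables (M : nat) (k1 k2 : 'I_M).

(* Evaluates to [diag(u k1 - u k2, u k2 - u k1)] in signed notation. *)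
Definition eq_gadget : 'I_M -> smat 2 := fun k a b =>
  if a != b then SZero
  else if k == k1 then (if a == ord0 then SPos 0 else SNeg 0)
  else if k == k2 then (if a == ord0 then SNeg 0 else SPos 0)
  else SZero.

Lemma metzler_eq_gadget : metzler_pencil eq_gadget.
Proof.
move=> k; split=> a b; rewrite /eq_gadget; last by move=> ->; right.
by rewrite eq_sym; case: eqP => // ->.
Qed.

Hypothesis k12 : k1 != k2.

Lemma coef_max_eq_gadget u (a : 'I_2) :
  coef_max spos eq_gadget u a a = (if a == ord0 then u k1 else u k2) /\
  coef_max sneg eq_gadget u a a = (if a == ord0 then u k2 else u k1).
Proof.
have k21 : (k2 == k1) = false by rewrite eq_sym (negbTE k12).
split; [rewrite (coef_max_supp1 _ _ (k0 := if a == ord0 then k1 else k2))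
       | rewrite (coef_max_supp1 _ _ (k0 := if a == ord0 then k2 else k1))];
  rewrite /eq_gadget eqxx /=;
  case: (a == ord0); rewrite ?eqxx ?k21 ?tplus0t // => k /negbTE ->;
  by case: (k == _).
Qed.

Lemma hom_spectrahedron_eq_gadget u : hom_spectrahedron eq_gadget u <-> u k1 = u k2.
Proof.
have [[P0 M0] [P1 M1]] := (coef_max_eq_gadget u ord0, coef_max_eq_gadget u ord_max).
rewrite eqxx /= in P0 M0; rewrite /= in P1 M1.
split.
- by case=> H _; apply: tle_anti; [move: (H ord_max) | move: (H ord0)];
    rewrite ?P0 ?M0 ?P1 ?M1.
- move=> E; split=> [a | a b ab].
  + by rewrite (coef_max_eq_gadget u a).1 (coef_max_eq_gadget u a).2 E; case: (_ == _);
      apply: tle_refl.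
  + have -> // : coef_max smod eq_gadget u a b = NegInf.
    by apply: coef_max_NegInf => k; left; rewrite /eq_gadget ab.
Qed.

End EqGadget.

Definition infeasible_pencil N : 'I_N.+1 -> smat 1 :=
  fun k _ _ => if k == ord0 then SNeg 0 else SZero.

Lemma metzler_infeasible_pencil N : metzler_pencil (@infeasible_pencil N).
Proof.
move=> k; split=> // a b _; rewrite /infeasible_pencil.
by case: (k == ord0); [left; exists R0 | right].
Qed.

Lemma infeasible_pencilP N (x : tvec N) :
  ~ metzler_spectrahedron (@infeasible_pencil N) x.
Proof.
have neg0 : coef_max sneg (@infeasible_pencil N) (ext0 x) ord0 ord0 = Fin 0.
  rewrite (coef_max_supp1 _ _ (k0 := ord0)) /infeasible_pencil ?eqxx /= ?ext0_0 ?Rplus_0_l //.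
  by move=> k /negbTE ->.
have pos0 : coef_max spos (@infeasible_pencil N) (ext0 x) ord0 ord0 = NegInf.
  by apply: coef_max_NegInf => k; left; rewrite /infeasible_pencil; case: (_ == _).
by move/metzler_spectrahedronE=> [/(_ ord0) + _]; rewrite neg0 pos0.
Qed.

Lemma projected_metzler_spectrahedron_empty d (P : tvec d -> Prop) :
  (forall x, ~ P x) -> projected_metzler_spectrahedron P.
Proof.
move=> P0; exists 0, 1, (@infeasible_pencil (d + 0)); split.
  exact: metzler_infeasible_pencil.
by move=> x; split=> [/P0 // | [y [/infeasible_pencilP]]].
Qed.

(** * Homogenization *)

Definition lift0_map K L (f : 'I_K -> 'I_L) (k : 'I_K.+1) : 'I_L.+1 :=
  if unlift ord0 k is Some s then lift ord0 (f s) else ord0.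

Lemma lift0_map_inj K L (f : 'I_K -> 'I_L) : injective f -> injective (lift0_map f).
Proof.
move=> f_inj a b; rewrite /lift0_map.
case: (unliftP ord0 a) => [i|] ->; case: (unliftP ord0 b) => [j|] ->;
  rewrite ?liftK ?unlift_none //.
by move/lift_inj/f_inj ->.
Qed.

Lemma ext0_lift0_map K L (f : 'I_K -> 'I_L) (y : tvec L) k :
  ext0 y (lift0_map f k) = ext0 (fun s => y (f s)) k.
Proof.
rewrite /lift0_map; case: (unliftP ord0 k) => [i|] ->; rewrite ?liftK ?unlift_none /=.
  by rewrite !ext0_lift.
by rewrite !ext0_0.
Qed.

Section Pin.
Variables (K L m : nat) (f : 'I_K -> 'I_L) (v : 'I_L) (Q : 'I_K.+1 -> smat m).

Definition pin_pencil : 'I_L.+1 -> smat (m + 2) :=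
  pencil_block (pencil_push (lift0_map f) Q) (eq_gadget ord0 (lift ord0 v)).

Lemma metzler_pin_pencil : metzler_pencil Q -> metzler_pencil pin_pencil.
Proof.
by move=> HQ; apply: metzler_pencil_block; [apply: metzler_pencil_push | apply: metzler_eq_gadget].
Qed.

Hypothesis f_inj : injective f.

Lemma metzler_spectrahedron_pin y : metzler_spectrahedron pin_pencil y <->
  metzler_spectrahedron Q (fun s => y (f s)) /\ y v = Fin 0.
Proof.
rewrite !metzler_spectrahedronE hom_spectrahedron_block hom_spectrahedron_push;
  last exact: lift0_map_inj.
rewrite hom_spectrahedron_eq_gadget ?(eq_sym ord0) ?neq_lift // ext0_0 ext0_lift.
by rewrite (hom_spectrahedron_ext _ (ext0_lift0_map f y)); split=> -[? <-].
Qed.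

End Pin.

Lemma hom_spectrahedron_dehom N m (Q : 'I_N.+1 -> smat m) u r : u ord0 = Fin r ->
  hom_spectrahedron Q u <->
  metzler_spectrahedron Q (fun s => tplus (Fin (- r)) (u (lift ord0 s))).
Proof.
move=> u0; rewrite metzler_spectrahedronE -[X in _ <-> X](hom_spectrahedron_shift _ _ r).
apply: hom_spectrahedron_ext => k; case: (unliftP ord0 k) => [s|] ->.
  by rewrite ext0_lift tplusKt.
by rewrite ext0_0 tplust0.
Qed.

Lemma metzler_spectrahedron_ext N m (Q : 'I_N.+1 -> smat m) x y :
  x =1 y -> metzler_spectrahedron Q x <-> metzler_spectrahedron Q y.
Proof.
move=> xy; rewrite !metzler_spectrahedronE; apply: hom_spectrahedron_ext => k.
by case: (unliftP ord0 k) => [s|] ->; rewrite ?ext0_lift ?ext0_0.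
Qed.

Section Dehomogenize.
Variables n d' : nat.

(* Moves the homogenizing coordinate [x_0] to the first auxiliary slot. *)
Definition dehom_nat (s : nat) : nat := if s == 0 then n else if s <= n then s.-1 else s.
Definition hom_nat (t : nat) : nat := if t < n then t.+1 else if t == n then 0 else t.

Lemma dehom_nat_lt (s : 'I_(n.+1 + d')) : dehom_nat s < n + d'.+1.
Proof. by rewrite /dehom_nat; have := ltn_ord s; repeat case: ifP => ?; lia. Qed.

Lemma hom_nat_lt (t : 'I_(n + d'.+1)) : hom_nat t < n.+1 + d'.
Proof. by rewrite /hom_nat; have := ltn_ord t; repeat case: ifP => ?; lia. Qed.

Definition dehom_ord (s : 'I_(n.+1 + d')) : 'I_(n + d'.+1) := Ordinal (dehom_nat_lt s).
Definition hom_ord (t : 'I_(n + d'.+1)) : 'I_(n.+1 + d') := Ordinal (hom_nat_lt t).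

Lemma dehom_ordK : cancel dehom_ord hom_ord.
Proof.
move=> s; apply: val_inj; rewrite /= /hom_nat /dehom_nat; have := ltn_ord s.
case: (nat_of_ord s) => [|s'] /=; first by rewrite ltnn eqxx.
by case: (ltnP s' n) => h _; repeat case: ifP => ?; lia.
Qed.

Lemma dehom_ord_inj : injective dehom_ord.
Proof. exact: can_inj dehom_ordK. Qed.

Lemma dehom_ord_lshift i : dehom_ord (lshift d' (lift ord0 i)) = lshift d'.+1 i.
Proof.
apply: val_inj; rewrite /= /dehom_nat /= /bump leq0n add1n; have := ltn_ord i.
by repeat case: ifP => ?; lia.
Qed.

End Dehomogenize.

Lemma projected_dehomogenization n (S : tvec n -> Prop) :
  projected_metzler_spectrahedron (homogenization S) -> projected_metzler_spectrahedron S.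
Proof.
case=> d' [m [Q [HQ Hiff]]].
have dehom_inj := @dehom_ord_inj n d'.
exists d'.+1, (m + 2), (pin_pencil (@dehom_ord n d') (dehom_ord (lshift d' ord0)) Q).
split=> [|x]; first exact: metzler_pin_pencil.
split.
- move=> Sx; have [|y [Qy yx]] := (Hiff (ext0 x)).1.
    by exists (Fin 0), x; split=> //; split=> [|i]; rewrite ?ext0_0 ?ext0_lift ?tplus0t.
  exists (fun t => y (hom_ord t)); split.
    apply/metzler_spectrahedron_pin => //; rewrite dehom_ordK -yx ext0_0; split=> //.
    by apply/(metzler_spectrahedron_ext _ (fun s => congr1 y (dehom_ordK s))).
  by move=> i; rewrite -dehom_ord_lshift dehom_ordK -yx ext0_lift.
- case=> y [/metzler_spectrahedron_pin [// | Qy y0] yx].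
  have [|x0 [x' [Sx' [x00 x'x]]]] := (Hiff (fun i => y (dehom_ord (lshift d' i)))).2.
    by exists (fun s => y (dehom_ord s)).
  suff -> : x = x' by [].
  apply: functional_extensionality => i.
  by move: (x'x i); rewrite -x00 y0 tplus0t dehom_ord_lshift yx.
Qed.

Section Homogenize.
Variables (n d' m : nat) (S : tvec n -> Prop) (Q : 'I_(n + d').+1 -> smat m).

Fact widen_leq : (n + d').+1 <= n.+1 + d'.+1.
Proof. by rewrite addSn addnS. Qed.

Definition widen (k : 'I_(n + d').+1) : 'I_(n.+1 + d'.+1) := widen_ord widen_leq k.
Definition x_var (i : 'I_n) : 'I_(n.+1 + d'.+1) := widen (lift ord0 (lshift d' i)).
Definition w_var : 'I_(n.+1 + d'.+1) := rshift n.+1 ord_max.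

(* The variables are [x_0, x, the auxiliary variables of Q, w]: the constant term of Q
   becomes [x_0], and the gadget [2 x_i <= x_0 + w] forces [x = -oo] when [x_0 = -oo]. *)
Definition hom_pencil : 'I_(n.+1 + d'.+1).+1 -> smat (m + n.+1) :=
  pencil_block (pencil_push (fun k => lift ord0 (widen k)) Q)
    (cone_gadget (lift ord0 (widen ord0)) (lift ord0 w_var) (fun i => lift ord0 (x_var i))).

Lemma metzler_hom_pencil : metzler_pencil Q -> metzler_pencil hom_pencil.
Proof.
move=> HQ; apply: metzler_pencil_block; first exact: metzler_pencil_push.
exact: metzler_cone_gadget.
Qed.

Lemma metzler_spectrahedron_hom_pencil y : metzler_spectrahedron hom_pencil y <->
  hom_spectrahedron Q (fun k => y (widen k)) /\
  forall i, tle (tplus (y (x_var i)) (y (x_var i))) (tplus (y (widen ord0)) (y w_var)).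
Proof.
have widen_inj : injective (fun k => lift ord0 (widen k)).
  by move=> a b /lift_inj /(congr1 val) ab; apply: val_inj.
rewrite metzler_spectrahedronE hom_spectrahedron_block hom_spectrahedron_push //=.
rewrite hom_spectrahedron_cone_gadget (hom_spectrahedron_ext _ (fun k => ext0_lift y (widen k))).
by setoid_rewrite ext0_lift.
Qed.

Lemma lshift_hom0 : lshift d'.+1 (ord0 : 'I_n.+1) = widen ord0.
Proof. exact: val_inj. Qed.

Lemma lshift_hom_lift i : lshift d'.+1 (lift ord0 i : 'I_n.+1) = x_var i.
Proof. exact: val_inj. Qed.

Hypothesis S_proj : forall x, S x <->
  exists y, metzler_spectrahedron Q y /\ forall i, x i = y (lshift d' i).

Lemma hom_pencil_complete z : homogenization S z ->
  exists y, metzler_spectrahedron hom_pencil y /\ forall i, z i = y (lshift d'.+1 i).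
Proof.
case=> x0 [x [/S_proj [y [Qy xy]] [z0 zx]]].
have z_lshift i : z i = match unlift ord0 i with
    | None => x0 | Some i' => tplus x0 (y (lshift d' i')) end.
  by case: (unliftP ord0 i) => [i'|] ->; rewrite ?liftK ?unlift_none -?xy.
case: x0 {z0 zx} z_lshift => [|r] z_lshift.
  exists (fun _ => NegInf); split; last by move=> i; rewrite z_lshift; case: unlift.
  by apply/metzler_spectrahedron_hom_pencil; split=> //; apply: hom_spectrahedron_NegInf.
pose B := \big[tmax/NegInf]_(i < n) tplus (z (lift ord0 i)) (z (lift ord0 i)).
pose yh (t : 'I_(n.+1 + d'.+1)) :=
  if t == w_var then tplus (Fin (- r)) B else tplus (Fin r) (ext0 y (inord t)).
have yh_widen k : yh (widen k) = tplus (Fin r) (ext0 y k).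
  have k_max : widen k != w_var.
    by rewrite -(inj_eq val_inj) /=; have := ltn_ord k; lia.
  by rewrite /yh (negbTE k_max); congr (tplus _ (ext0 y _)); apply: val_inj; rewrite /= inordK.
have yh_x i : yh (x_var i) = z (lift ord0 i).
  by rewrite yh_widen ext0_lift z_lshift liftK.
exists yh; split.
  apply/metzler_spectrahedron_hom_pencil; split.
    by rewrite (hom_spectrahedron_ext _ yh_widen) hom_spectrahedron_shift -metzler_spectrahedronE.
  move=> i; rewrite yh_x yh_widen ext0_0 tplust0 /yh eqxx tplusKt.
  exact: (ler_big_tmax (fun i => tplus (z (lift ord0 i)) (z (lift ord0 i)))).
move=> i; case: (unliftP ord0 i) => [i'|] ->.
  by rewrite lshift_hom_lift yh_x.
by rewrite lshift_hom0 yh_widen ext0_0 tplust0 z_lshift unlift_none.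
Qed.

Hypothesis S_witness : exists x, S x.

Lemma hom_pencil_sound y z : metzler_spectrahedron hom_pencil y ->
  (forall i, z i = y (lshift d'.+1 i)) -> homogenization S z.
Proof.
case/metzler_spectrahedron_hom_pencil=> Qy cone zy.
case y0 : (y (widen ord0)) => [|r].
  have [xs Sxs] := S_witness; exists NegInf, xs; split=> //.
  split=> [|i]; rewrite zy; first by rewrite lshift_hom0.
  by move: (cone i); rewrite lshift_hom_lift y0; case: (y (x_var i)).
exists (Fin r), (fun i => tplus (Fin (- r)) (y (x_var i))); split.
  apply/S_proj; exists (fun s => tplus (Fin (- r)) (y (widen (lift ord0 s)))); split=> //.
  exact: (@hom_spectrahedron_dehom _ _ Q (fun k => y (widen k)) r y0).1 Qy.
by split=> [|i]; rewrite zy ?lshift_hom0 ?lshift_hom_lift ?tplusKt.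
Qed.

End Homogenize.

Lemma projected_homogenization n (S : tvec n -> Prop) :
  projected_metzler_spectrahedron S -> projected_metzler_spectrahedron (homogenization S).
Proof.
have [S_witness | S0] := classic (exists x, S x); last first.
  move=> _; apply: projected_metzler_spectrahedron_empty => z [_ [x [Sx _]]].
  by apply: S0; exists x.
case=> d' [m [Q [HQ S_proj]]].
exists d'.+1, (m + n.+1), (hom_pencil Q); split; first exact: metzler_hom_pencil.
move=> z; split; first exact: hom_pencil_complete.
by case=> y [Qy zy]; apply: hom_pencil_sound Qy zy.
Qed.

Theorem mainTheorem16 (n : nat) (S : tvec n -> Prop) :
  trop_convex S ->
  (projected_metzler_spectrahedron S <->
   projected_metzler_spectrahedron (homogenization S)).
Proof.
by move=> _; split; [apply: projected_homogenization | apply: projected_dehomogenization].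
Qed.
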